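(* Let $n\ge2$, $m,m'\in\mathbb{Z}$ with $\gcd(n,m)=1$ and $\gcd(n,m+m')=1$. Then, as rational functions of $s$, $$(1-s)\,\zeta(s,\sigma_{n,m+m'};\beta_{n,q})=(1-q^{m'}s)\,\zeta(q^{m'}s,\sigma_{n,m};\beta_{n,q}).$$
   Context: $\sigma_{n,m}:=(\sigma_1\cdots\sigma_{n-1})^m\in\mathrm{B}_n$ (braid group with standard generators $\sigma_i$). The Burau representation $\beta_{n,q}$ is given by $\beta_{n,q}(\sigma_i)=I_{i-1}\oplus\begin{pmatrix}1-q&1\\ q&0\end{pmatrix}\oplus I_{n-i-1}$ over $\mathbb{Z}[q^{\pm1}]$, and $\zeta(s,\sigma;\beta_{n,q}):=\det(I_n-\beta_{n,q}(\sigma)s)^{-1}$. *)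

From HB Require Import structures.
From mathcomp Require Import all_boot all_order all_algebra.
Set Implicit Arguments. Unset Strict Implicit. Unset Printing Implicit Defensive.
Import Order.TTheory GRing.Theory Num.Theory.
Local Open Scope ring_scope.

(* Burau matrix of sigma_i (1 <= i <= n-1), 0-indexed rows/cols:
   block [[1-q, 1],[q, 0]] at positions (i-1, i), identity elsewhere. *)
Definition burau_gen (R : nzRingType) (n : nat) (q : R) (i : nat) : 'M[R]_n :=
  \matrix_(a < n, b < n)
    if (a == i.-1 :> nat) && (b == i.-1 :> nat) then 1 - q
    else if (a == i.-1 :> nat) && (b == i :> nat) then 1
    else if (a == i :> nat) && (b == i.-1 :> nat) then q
    else if (a == i :> nat) && (b == i :> nat) then 0
    else (a == b)%:R.

Definition burau_delta (R : nzRingType) (n : nat) (q : R) : 'M[R]_n :=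
  foldr (fun i A => burau_gen n q i *m A) 1%:M (iota 1 n.-1).

Definition mxpowz (R : comUnitRingType) (n : nat) (A : 'M[R]_n) (m : int)
  : 'M[R]_n :=
  match m with
  | Posz k => iter k (mulmx A) 1%:M
  | Negz k => invmx (iter k.+1 (mulmx A) 1%:M)
  end.

(* beta_{n,q}(sigma_{n,m}) = (beta(sigma_1 ... sigma_{n-1}))^m *)
Definition burau_sigma (R : comUnitRingType) (n : nat) (q : R) (m : int)
  : 'M[R]_n := mxpowz (burau_delta n q) m.

Definition zeta (F : fieldType) (n : nat) (t : F) (B : 'M[F]_n) : F :=
  (\det (1%:M - t *: B))^-1.

(* Q(q): the fraction field of Z[q], containing Z[q^{+-1}] *)
Definition Qq : fieldType := {fraction {poly int}}.
Definition qv : Qq := tofrac 'X.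
Definition Qqs : fieldType := {fraction {poly Qq}}.
Definition sv : Qqs := tofrac 'X.
Definition qs : Qqs := tofrac (qv%:P).

From mathcomp Require Import all_boot all_order all_algebra all_fingroup.
From mathcomp Require Import zify ring.
Set Implicit Arguments. Unset Strict Implicit. Unset Printing Implicit Defensive.
Import GRing.Theory.
Local Open Scope ring_scope.

(* Let P be the permutation matrix of the cyclic shift of Z/n.  The Burau
   matrix of sigma_1 ... sigma_{n-1} is q P + (1 - q) e_0 1^T, and 1^T is a
   left eigenvector of it for the eigenvalue 1.  Both features survive integer
   powers: beta(sigma_{n,k}) = q^k P^k + w 1^T for some column w.  For
   matrices whose columns all have the same sum, a rank-one update w 1^T
   rescales the determinant by the ratio of the column sums, whence
     (1 - t q^k) det(I - t beta(sigma_{n,k})) = (1 - t) det(I - t q^k P^k).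
   When k is prime to n, P^k is conjugate to P, so the right-hand side
   depends on t q^k only; comparing k = m + m' at t = s with k = m at
   t = q^m' s gives the identity. *)

Section SubrPerm.
Variable T : finZmodType.

Definition subr_perm (c : T) : {perm T} := perm (addIr (- c)).

Lemma subr_permE c x : subr_perm c x = x - c.
Proof. by rewrite permE. Qed.

Lemma subr_permD c d : subr_perm (c + d) = (subr_perm c * subr_perm d)%g.
Proof. by apply/permP => x; rewrite permM !subr_permE opprD addrA. Qed.

Lemma subr_perm0 : subr_perm 0 = 1%g.
Proof. by apply/permP => x; rewrite perm1 subr_permE subr0. Qed.

End SubrPerm.

Lemma subr_perm_conj (T : finUnitRingType) (c : T) : c \is a GRing.unit ->
  exists t : {perm T}, subr_perm c = (t^-1 * subr_perm 1%R * t)%g.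
Proof.
move=> Uc; set t := perm (mulIr Uc); exists t; apply/permP => x.
have tE y : t y = y * c by rewrite permE.
rewrite !permM -{1}[x](permKV t) tE !subr_permE tE.
by rewrite mulrBl mul1r.
Qed.

Lemma det_1_sub_perm_conj (R : comPzRingType) n (u : R) (s t : 'S_n) :
  \det (1%:M - u *: perm_mx (t^-1 * s * t)%g) = \det (1%:M - u *: perm_mx s).
Proof.
have tVt : perm_mx t^-1 *m perm_mx t = 1%:M :> 'M[R]_n.
  by rewrite -perm_mxM mulVg perm_mx1.
have -> : 1%:M - u *: perm_mx (t^-1 * s * t)%g =
          perm_mx t^-1 *m (1%:M - u *: perm_mx s) *m perm_mx t.
  by rewrite !perm_mxM mulmxBr mulmxBl mulmx1 tVt -scalemxAr -scalemxAl.
rewrite !det_mulmx mulrAC.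
by rewrite -det_mulmx tVt det1 mul1r.
Qed.

Section ColumnSums.
Variables (R : comPzRingType) (n : nat).
Local Notation ones := (const_mx 1 : 'rV[R]_n.+1).
Local Notation e0 := (delta_mx 0 0 : 'cV[R]_n.+1).
Local Notation e0r := (delta_mx 0 0 : 'rV[R]_n.+1).

Lemma ones_mul_perm (s : 'S_n.+1) : ones *m perm_mx s = ones.
Proof. by rewrite -[s]invgK -col_permE col_perm_const. Qed.

Lemma ones_mul_e0 : ones *m e0 = 1.
Proof.
apply/matrixP => i j; rewrite !ord1 !mxE (bigD1 0) //= big1 => [|k /negbTE nk].
  by rewrite !mxE !eqxx mulr1 addr0.
by rewrite !mxE nk mulr0.
Qed.

(* [L] is a unipotent change of basis with [e0r *m L = ones]: conjugating by
   it turns the common left eigenvector [ones] into the first unit vector. *)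
Let X := e0 *m (ones - e0r).
Let L := 1%:M + X.
Let Li := 1%:M - X.

Let e0r_mul_e0 : e0r *m e0 = 1.
Proof. by rewrite mul_delta_mx; apply/matrixP => i j; rewrite !ord1 !mxE. Qed.

Let LLi : L *m Li = 1%:M.
Proof.
have XX : X *m X = 0.
  have r0 : (ones - e0r) *m e0 = 0 by rewrite mulmxBl ones_mul_e0 e0r_mul_e0 subrr.
  by rewrite /X !mulmxA -(mulmxA e0) r0 mulmx0 mul0mx.
by rewrite /Li mulmxBr mulmx1 /L mulmxDl mul1mx XX addr0 addrK.
Qed.

Let ones_Li : ones *m Li = e0r.
Proof. by rewrite /Li /X mulmxBr mulmx1 mulmxA ones_mul_e0 mul1mx opprB addrC subrK. Qed.

Let e0r_L : e0r *m L = ones.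
Proof. by rewrite /L /X mulmxDr mulmx1 mulmxA e0r_mul_e0 mul1mx addrC subrK. Qed.

Let det_colsum (C : 'M[R]_n.+1) c : ones *m C = c *: ones ->
  \det C = c * cofactor (L *m C *m Li) 0 0.
Proof.
move=> HC; have row0 : row 0 (L *m C *m Li) = c *: e0r.
  by rewrite rowE !mulmxA e0r_L HC -scalemxAl ones_Li.
have -> : \det C = \det (L *m C *m Li).
  by rewrite !det_mulmx mulrAC -det_mulmx LLi det1 mul1r.
rewrite (expand_det_row _ 0) (bigD1 0) //= big1 ?addr0 => [|j nj].
  by have /matrixP/(_ 0 0) := row0; rewrite !mxE eqxx mulr1 => ->.
by have /matrixP/(_ 0 j) := row0; rewrite !mxE (negbTE nj) mulr0 => ->; rewrite mul0r.
Qed.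

Let cofactor_rank1_update (B : 'M[R]_n.+1) (w : 'cV[R]_n.+1) :
  cofactor (L *m (B + w *m ones) *m Li) 0 0 = cofactor (L *m B *m Li) 0 0.
Proof.
have -> : L *m (B + w *m ones) *m Li = L *m B *m Li + (L *m w) *m e0r.
  by rewrite -ones_Li !mulmxA -mulmxDl -(mulmxA L w) -mulmxDr.
rewrite /cofactor; congr (_ * _); congr (\det _); apply/matrixP => i j.
by rewrite !mxE big_ord1 !mxE /= mulr0 addr0.
Qed.

Lemma det_rank1_update_colsum (B : 'M[R]_n.+1) (w : 'cV[R]_n.+1) (a b : R) :
  ones *m (B + w *m ones) = a *: ones -> ones *m B = b *: ones ->
  b * \det (B + w *m ones) = a * \det B.
Proof.
move=> HA HB.
by rewrite (det_colsum HA) (det_colsum HB) cofactor_rank1_update mulrCA.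
Qed.

End ColumnSums.

Section ShiftPlusRank1.
Variables (R : comUnitRingType) (n : nat).
Local Notation ones := (const_mx 1 : 'rV[R]_n.+1).
Local Notation P c := (perm_mx (subr_perm c) : 'M[R]_n.+1).

Lemma shift_mxD (c d : 'I_n.+1) : P (c + d) = P c *m P d.
Proof. by rewrite subr_permD perm_mxM. Qed.

Lemma shift_mx0 : P 0 = 1%:M.
Proof. by rewrite subr_perm0 perm_mx1. Qed.

Definition shift_plus_rank1 (A : 'M[R]_n.+1) (r : R) (c : 'I_n.+1) :=
  exists w : 'cV[R]_n.+1, A = r *: P c + w *m ones.

Lemma shift_plus_rank1_id : shift_plus_rank1 1%:M 1 0.
Proof. by exists 0; rewrite mul0mx addr0 scale1r shift_mx0. Qed.

Lemma shift_plus_rank1_mul A B r s c d :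
  shift_plus_rank1 A r c -> shift_plus_rank1 B s d ->
  shift_plus_rank1 (A *m B) (r * s) (c + d).
Proof.
move=> [v ->] [w ->]; exists (r *: (P c *m w) + s *: v + v *m (ones *m w)).
rewrite mulmxDl !mulmxDr -!scalemxAl -!scalemxAr scalerA shift_mxD.
rewrite -[v *m _ *m perm_mx _]mulmxA ones_mul_perm.
by rewrite !mulmxDl -!scalemxAl !mulmxA !addrA.
Qed.

Lemma shift_plus_rank1_invmx A r c :
  r \is a GRing.unit -> ones *m A = ones -> shift_plus_rank1 A r c ->
  A \in unitmx /\ shift_plus_rank1 (invmx A) r^-1 (- c).
Proof.
move=> Ur HA [w defA].
have PcP : P c *m P (- c) = 1%:M by rewrite -shift_mxD subrr shift_mx0.
have UA : A \in unitmx.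
  have colsum_r : ones *m (r *: P c) = r *: ones by rewrite -scalemxAr ones_mul_perm.
  have det_rA : r * \det A = 1 * \det (r *: P c).
    by rewrite defA; apply: det_rank1_update_colsum; rewrite // -defA scale1r.
  rewrite mul1r detZ in det_rA; rewrite unitmxE.
  have : (r * \det A) \is a GRing.unit.
    by rewrite det_rA det_perm unitrM !unitrX ?unitrN1.
  by rewrite unitrM => /andP[].
split=> //; exists (- r^-1 *: (invmx A *m w)).
have : 1%:M = r *: (invmx A *m P c) + invmx A *m w *m ones.
  by rewrite -(mulVmx UA) {2}defA mulmxDr -scalemxAr mulmxA.
move=> /(congr1 (fun M => r^-1 *: (M *m P (- c)))).
rewrite mul1mx mulmxDl !scalerDr -!scalemxAl -!mulmxA PcP mulmx1 scalerA mulVr //.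
by rewrite scale1r ones_mul_perm => ->; rewrite scaleNr addrK.
Qed.

Lemma shift_plus_rank1_iter A r c (j : nat) :
  ones *m A = ones -> shift_plus_rank1 A r c ->
  ones *m iter j (mulmx A) 1%:M = ones /\
  shift_plus_rank1 (iter j (mulmx A) 1%:M) (r ^+ j) (c *+ j).
Proof.
move=> HA sA; elim: j => [|j [Hj sj]] /=.
  by rewrite mulmx1 expr0 mulr0n; split=> //; exact: shift_plus_rank1_id.
by rewrite mulmxA HA Hj exprS mulrS; split=> //; exact: shift_plus_rank1_mul.
Qed.

Lemma shift_plus_rank1_mxpowz A r c (k : int) :
  r \is a GRing.unit -> ones *m A = ones -> shift_plus_rank1 A r c ->
  ones *m mxpowz A k = ones /\ shift_plus_rank1 (mxpowz A k) (r ^ k) (c *~ k).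
Proof.
move=> Ur HA sA; case: k => j /=; first exact: shift_plus_rank1_iter.
have [Hj sj] := shift_plus_rank1_iter j.+1 HA sA.
have [Uj sVj] := shift_plus_rank1_invmx (unitrX j.+1 Ur) Hj sj.
by split=> //; rewrite -{1}Hj mulmxK.
Qed.

Lemma det_1_sub_shift_plus_rank1 A r c (t : R) :
  ones *m A = ones -> shift_plus_rank1 A r c ->
  (1 - t * r) * \det (1%:M - t *: A) = (1 - t) * \det (1%:M - (t * r) *: P c).
Proof.
move=> HA [w defA].
have def1A : 1%:M - t *: A = 1%:M - (t * r) *: P c + (- t *: w) *m ones.
  by rewrite defA scalerDr scalerA -scalemxAl scaleNr opprD addrA.
rewrite def1A; apply: det_rank1_update_colsum.
  by rewrite -def1A mulmxBr mulmx1 -scalemxAr HA -{1}[ones]scale1r -scalerBl.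
by rewrite mulmxBr mulmx1 -scalemxAr ones_mul_perm -{1}[ones]scale1r -scalerBl.
Qed.

End ShiftPlusRank1.

Section BurauDelta.
Variables (R : comNzRingType) (N : nat) (q : R).
Local Notation n := N.+2.

Lemma sum_mul_natr_eq (f : 'I_n -> R) (x : nat) (hx : (x < n)%N) :
  \sum_c f c * (c == x :> nat)%:R = f (Ordinal hx).
Proof.
rewrite (bigD1 (Ordinal hx)) //= eqxx mulr1 big1 ?addr0 // => c.
by rewrite -val_eqE /= => /negbTE ->; rewrite mulr0.
Qed.

Lemma mul_burau_gen (A : 'M[R]_n) k (hk : (k.+1 < n)%N) (a b : 'I_n) :
  (A *m burau_gen n q k.+1) a b =
  if b == k :> nat then (1 - q) * A a (Ordinal (ltnW hk)) + q * A a (Ordinal hk)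
  else if b == k.+1 :> nat then A a (Ordinal (ltnW hk)) else A a b.
Proof.
rewrite mxE; have kk1 : (k == k.+1) = false by rewrite ltn_eqF.
have k1k : (k.+1 == k) = false by rewrite gtn_eqF.
case: ifP => [/eqP bk|bk]; first rewrite -(sum_mul_natr_eq (A a) (ltnW hk)).
  rewrite -(sum_mul_natr_eq (A a) hk) !mulr_sumr -big_split /=.
  apply: eq_bigr => c _; rewrite mxE /= -val_eqE /= bk eqxx kk1 /=.
  by do ?case: eqP => /= ?; rewrite ?mulr1n ?mulr0n; try lia; ring.
case: ifP => [/eqP bk1|bk1]; first rewrite -(sum_mul_natr_eq (A a) (ltnW hk)).
  apply: eq_bigr => c _; rewrite mxE /= -val_eqE /= bk1 eqxx k1k /=.
  by do ?case: eqP => /= ?; rewrite ?mulr1n ?mulr0n; try lia; ring.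
rewrite (eq_bigr (fun c => A a c * (c == b :> nat)%:R)) => [|c _].
  by rewrite (sum_mul_natr_eq _ (ltn_ord b)); congr (A a _); apply: val_inj.
by rewrite mxE /= bk bk1 !andbF.
Qed.

Definition burau_prefix k : 'M[R]_n :=
  foldr (fun i A => burau_gen n q i *m A) 1%:M (iota 1 k).

Lemma burau_prefixS k : burau_prefix k.+1 = burau_prefix k *m burau_gen n q k.+1.
Proof.
have foldr_mul s (A : 'M[R]_n) : foldr (fun i A => burau_gen n q i *m A) A s =
    foldr (fun i A => burau_gen n q i *m A) 1%:M s *m A.
  by elim: s => [|i s IH] /=; rewrite ?mul1mx // IH mulmxA.
by rewrite /burau_prefix -[k.+1]addn1 iotaD foldr_cat /= mulmx1 foldr_mul addnC.
Qed.

Definition burau_prefix_entry k (a b : nat) : R :=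
  if a == 0%N then (if (b < k)%N then 1 - q else if b == k then 1 else 0)
  else if (a <= k)%N then (if b == a.-1 then q else 0) else (a == b)%:R.

Lemma burau_prefixE k : (k < n)%N ->
  burau_prefix k = \matrix_(a, b) burau_prefix_entry k a b.
Proof.
elim: k => [_|k IH hk].
  apply/matrixP => a b; rewrite !mxE /burau_prefix_entry -val_eqE /=.
  case: ifP => [/eqP ->|a0]; last by rewrite leqn0 a0.
  by rewrite eq_sym; case: eqP.
rewrite burau_prefixS; apply/matrixP => a b.
rewrite mul_burau_gen IH ?(ltnW hk) // !mxE /burau_prefix_entry /=.
have ha := ltn_ord a; have hb := ltn_ord b; rewrite !ltnn !eqxx.
by do ! case: ifP => ?; do ? case: eqP => ?; rewrite ?mulr1n ?mulr0n;
  try (exfalso; lia); ring.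
Qed.

Lemma burau_deltaE : burau_delta n q =
  q *: perm_mx (subr_perm 1) + (1 - q) *: ((delta_mx 0 0 : 'cV_n) *m const_mx 1).
Proof.
rewrite /burau_delta -/(burau_prefix N.+1) burau_prefixE //; apply/matrixP => a b.
rewrite !mxE big_ord1 !mxE subr_permE subr_eq -val_eqE /= modnDmr.
rewrite eqxx andbT mulr1 -val_eqE /burau_prefix_entry /=.
have ha := ltn_ord a; have hb := ltn_ord b.
have [bN|bN] := eqVneq (b : nat) N.+1;
  [rewrite bN addn1 modnn | rewrite modn_small addn1; last lia];
  by do ? case: eqP => ?; do ! case: ifP => ?; rewrite ?mulr1n ?mulr0n;
    try (exfalso; lia); ring.
Qed.

End BurauDelta.

Section BurauSigma.
Variables (R : comUnitRingType) (N : nat) (q : R).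
Local Notation n := N.+2.
Local Notation ones := (const_mx 1 : 'rV[R]_n).

Lemma ones_mul_burau_delta : ones *m burau_delta n q = ones.
Proof.
rewrite burau_deltaE mulmxDr -!scalemxAr ones_mul_perm mulmxA ones_mul_e0.
by rewrite mul1mx -scalerDl addrC subrK scale1r.
Qed.

Lemma burau_delta_shift_plus_rank1 : shift_plus_rank1 (burau_delta n q) q 1.
Proof. by exists ((1 - q) *: delta_mx 0 0); rewrite burau_deltaE scalemxAl. Qed.

Lemma unitZp_intr (k : int) : coprime n `|k| -> (k%:~R : 'I_n) \is a GRing.unit.
Proof.
case: k => j /= cj; first by rewrite -pmulrn (@unitZpE n j).
by rewrite NegzE mulrNz unitrN -pmulrn (@unitZpE n j.+1).
Qed.

Lemma det_1_sub_burau_sigma (t : R) (k : int) :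
  q \is a GRing.unit -> coprime n `|k| ->
  (1 - t * q ^ k) * \det (1%:M - t *: burau_sigma n q k) =
  (1 - t) * \det (1%:M - (t * q ^ k) *: perm_mx (subr_perm (1 : 'I_n))).
Proof.
move=> Uq ck.
have [Hk sk] := shift_plus_rank1_mxpowz k Uq ones_mul_burau_delta
  burau_delta_shift_plus_rank1.
rewrite (det_1_sub_shift_plus_rank1 _ Hk sk).
by have [s ->] := subr_perm_conj (unitZp_intr ck); rewrite det_1_sub_perm_conj.
Qed.

End BurauSigma.

(* Also valid when [x = 0], hence [d = 0], thanks to the convention [0^-1 = 0]. *)
Lemma div_eq_div_of_mul_eq (F : fieldType) (a c d x : F) :
  a != 0 -> c != 0 -> c * d = a * x -> a / d = c / x.
Proof.
move=> a0 c0 E; have -> : d = a * x / c by rewrite -E mulrC mulKf.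
by rewrite !invfM invrK !mulrA mulfV // mul1r mulrC.
Qed.

Lemma qsXz (k : int) : qs ^ k = tofrac ((qv ^ k)%:P).
Proof. by have /= -> := fmorphXz (@tofrac _ \o polyC) k qv. Qed.

Lemma qs_neq0 : qs != 0.
Proof. by rewrite /qs tofrac_eq0 polyC_eq0 /qv tofrac_eq0 polyX_eq0. Qed.

Lemma one_sub_polyCX_neq0 (K : nzRingType) (c : K) : 1 - c%:P * 'X != 0.
Proof.
apply/eqP => /(congr1 (horner^~ 0)).
rewrite hornerD hornerN hornerCM hornerX horner0 mulr0 subr0 hornerC.
by move/eqP; rewrite oner_eq0.
Qed.

Lemma one_sub_qsXz_sv_neq0 (k : int) : 1 - qs ^ k * sv != 0.
Proof.
by rewrite qsXz /sv -tofracM -tofrac1 -tofracB tofrac_eq0 one_sub_polyCX_neq0.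
Qed.

Theorem zeta_burau_sigma_twist (F : fieldType) N (q s : F) (m m' : int) :
  q != 0 -> coprime N.+2 `|m| -> coprime N.+2 `|m + m'| ->
  1 - s != 0 -> 1 - q ^ m' * s != 0 -> 1 - s * q ^ (m + m') != 0 ->
  (1 - s) * zeta s (burau_sigma N.+2 q (m + m'))
  = (1 - q ^ m' * s) * zeta (q ^ m' * s) (burau_sigma N.+2 q m).
Proof.
move=> q0 cm cmm' nz_s nz_m' nz_mm'; have Uq : q \is a GRing.unit by rewrite unitfE.
have Emm' := det_1_sub_burau_sigma s Uq cmm'.
have Em := det_1_sub_burau_sigma (q ^ m' * s) Uq cm.
have qXzD : q ^ m' * s * q ^ m = s * q ^ (m + m').
  by rewrite mulrAC -exprzDr // addrC mulrC.
rewrite {}qXzD in Em.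
rewrite /zeta (div_eq_div_of_mul_eq nz_s nz_mm' Emm').
by rewrite (div_eq_div_of_mul_eq nz_m' nz_mm' Em).
Qed.

Theorem corollary3p2 (n : nat) (m m' : int) :
  (2 <= n)%N ->
  coprime n (absz m) ->
  coprime n (absz (m + m')) ->
  (1 - sv) * zeta sv (burau_sigma n qs (m + m'))
  = (1 - qs ^ m' * sv) * zeta (qs ^ m' * sv) (burau_sigma n qs m).
Proof.
move=> n_ge2; have [N ->] : exists N, n = N.+2 by exists n.-2; lia.
move=> cm cmm'; apply: zeta_burau_sigma_twist => //.
- exact: qs_neq0.
- by have := one_sub_qsXz_sv_neq0 0; rewrite expr0z mul1r.
- exact: one_sub_qsXz_sv_neq0.
- by rewrite mulrC one_sub_qsXz_sv_neq0.
Qed.
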